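(* Let $n,s,k$ be integers with $0\le s\le n$ and $n\ge k>1$. Then $F_{s,k}(n)=(-1)^k F_{n-s,k}(n)$.
   Context: For an integer $j\ge0$, $\binom{x}{j}=x(x-1)\cdots(x-j+1)/j!$ as a polynomial in $x$, and $\binom{x}{j}=0$ for $j<0$. For integers $s\ge1$, $k\ge1$, the Moser polynomial is $F_{s,k}(x)=\sum_{p=1}^{s}(-1)^{p-1}p^{k-1}\binom{x}{s-p}$; for integers $s<1$ set $F_{s,k}\equiv0$. *)

From HB Require Import structures.
From mathcomp Require Import all_boot all_order all_algebra.
Set Implicit Arguments. Unset Strict Implicit. Unset Printing Implicit Defensive.
Import Order.TTheory GRing.Theory Num.Theory.
Local Open Scope ring_scope.

Definition binpoly (j : nat) : {poly rat} :=
  (j`!%:R)^-1 *: \prod_(i < j) ('X - (i%:R)%:P).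

(* Moser polynomial F_{s,k}(x) = sum_{p=1}^s (-1)^(p-1) p^(k-1) binom(x, s-p);
   for s = 0 (i.e. s < 1) the sum is empty, so F = 0, matching the convention.
   In the range p in [1, s], s - p >= 0, so no negative-index binomial arises. *)
Definition moser (s k : nat) : {poly rat} :=
  \sum_(1 <= p < s.+1) ((-1) ^+ (p.-1) * (p ^ k.-1)%:R) *: binpoly (s - p).

(* Substituting q = s - p turns F_{s,k}(n) into (-1)^(s+k) times the truncated
   alternating sum T_s = sum_{q<s} (-1)^q C(n,q) (q-s)^(k-1).  The full sum over
   q <= n is an n-th finite difference of a polynomial of degree k-1 < n, hence 0.
   In it the term q = s vanishes, and q |-> n - q maps the terms q > s onto those
   of T_{n-s} up to the sign (-1)^(n+k-1); so T_s = (-1)^(n+k) T_{n-s}, which is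
   the claimed symmetry after restoring the signs. *)

From HB Require Import structures.
From mathcomp Require Import all_boot all_order all_algebra.
From mathcomp Require Import zify ring.
Import GRing.Theory Num.Theory.
Local Open Scope ring_scope.

Lemma signr_odd_eq (R : pzRingType) (a b : nat) :
  odd a = odd b -> (-1) ^+ a = (-1) ^+ b :> R.
Proof. by move=> odd_ab; rewrite -signr_odd odd_ab signr_odd. Qed.

Lemma natr_ffactE (R : pzRingType) (n j : nat) :
  (n ^_ j)%:R = \prod_(i < j) (n%:R - i%:R) :> R.
Proof.
elim: j => [|j IHj]; first by rewrite big_ord0 ffactn0.
rewrite big_ord_recr /= -IHj ffactnSr natrM.
case: (leqP j n) => [le_jn | lt_nj]; first by rewrite natrB.
by rewrite ffact_small // !mul0r.
Qed.

Lemma horner_binpoly (j n : nat) : (binpoly j).[n%:R] = 'C(n, j)%:R.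
Proof.
rewrite /binpoly hornerZ horner_prod.
under eq_bigr do rewrite hornerXsubC.
rewrite -natr_ffactE -bin_ffact natrM mulrC -mulrA mulfV ?mulr1 //.
by rewrite pnatr_eq0 -lt0n fact_gt0.
Qed.

Lemma alt_binom_sumS (R : comPzRingType) (f : nat -> R) n :
  \sum_(0 <= q < n.+2) (-1) ^+ q * 'C(n.+1, q)%:R * f q
  = \sum_(0 <= q < n.+1) (-1) ^+ q * 'C(n, q)%:R * (f q - f q.+1).
Proof.
have shifted : \sum_(0 <= q < n.+1) (-1) ^+ q.+1 * 'C(n, q.+1)%:R * f q.+1
             = \sum_(0 <= q < n.+1) (-1) ^+ q * 'C(n, q)%:R * f q - f 0%N.
  rewrite [in RHS]big_nat_recl // bin0 expr0 mulr1 mul1r addrAC subrr add0r.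
  by rewrite big_nat_recr //= bin_small // mulr0 mul0r addr0.
rewrite big_nat_recl // bin0 mul1r.
under eq_bigr do rewrite binS natrD mulrDr mulrDl.
rewrite big_split /= shifted mul1r addrA addrCA subrr addr0 -big_split /=.
by apply: eq_bigr => q _; rewrite exprS; ring.
Qed.

Lemma alt_binom_sum_exp_eq0 (R : comPzRingType) n j (c : R) : (j < n)%N ->
  \sum_(0 <= q < n.+1) (-1) ^+ q * 'C(n, q)%:R * (q%:R + c) ^+ j = 0.
Proof.
elim: n j c => [//|n IHn] j c ltjn.
rewrite alt_binom_sumS.
have diff q : (q%:R + c) ^+ j - (q.+1%:R + c) ^+ j
            = - \sum_(i < j) (q%:R + c) ^+ i *+ 'C(j, i).
  rewrite -addn1 natrD addrAC exprD1n big_ord_recr /= binn mulr1n.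
  by rewrite opprD addrCA subrr addr0.
under eq_bigr do rewrite diff mulrN mulr_sumr.
rewrite sumrN exchange_big /= big1 ?oppr0 // => i _.
under eq_bigr do rewrite -[_ ^+ i *+ _]mulr_natr mulrA.
by rewrite -mulr_suml IHn ?mul0r //; have := ltn_ord i; lia.
Qed.

Definition trunc_alt_binom_sum (R : pzRingType) (n K s : nat) : R :=
  \sum_(0 <= q < s) (-1) ^+ q * 'C(n, q)%:R * (q%:R - s%:R) ^+ K.

Lemma trunc_alt_binom_sum_reflect (R : comPzRingType) (n K s : nat) :
  (0 < K)%N -> (K < n)%N -> (s <= n)%N ->
  trunc_alt_binom_sum R n K s
    = (-1) ^+ (n + K).+1 * trunc_alt_binom_sum R n K (n - s).
Proof.
move=> K_gt0 lt_Kn le_sn.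
have tail : \sum_(s.+1 <= q < n.+1) (-1) ^+ q * 'C(n, q)%:R * (q%:R - s%:R) ^+ K
          = (-1) ^+ (n + K) * trunc_alt_binom_sum R n K (n - s) :> R.
  rewrite -{1}(add0n s.+1) big_addn big_nat_rev /trunc_alt_binom_sum mulr_sumr subSS.
  apply: eq_big_nat => r /andP [_ lt_r_ns].
  have -> : (0 + (n - s) - r.+1 + s.+1 = n - r)%N by lia.
  rewrite bin_sub; last by lia.
  have -> : ((n - r)%:R - s%:R : R) = - (r%:R - (n - s)%:R).
    by rewrite !natrB; [rewrite opprB addrAC | lia | lia].
  have sign : (-1) ^+ (n - r) * (-1) ^+ K = (-1) ^+ (n + K) * (-1) ^+ r :> R.
    by rewrite -!exprD; apply: signr_odd_eq; lia.
  by rewrite (exprNn (_ - _)) !mulrA -sign; ring.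
have := @alt_binom_sum_exp_eq0 R n K (- s%:R) lt_Kn.
rewrite (@big_cat_nat _ _ _ s) //= ?(leqW le_sn) // (@big_ltn _ _ _ s) ?ltnS //.
rewrite subrr expr0n (gtn_eqF K_gt0) mulr0 add0r tail.
rewrite -/(trunc_alt_binom_sum R n K s).
by move/eqP; rewrite addr_eq0 => /eqP ->; rewrite exprS mulN1r mulNr.
Qed.

Lemma horner_moser (n s k : nat) : (0 < k)%N ->
  (moser s k).[n%:R] = (-1) ^+ (s + k) * trunc_alt_binom_sum rat n k.-1 s.
Proof.
move=> k_gt0.
rewrite /moser horner_sum /trunc_alt_binom_sum mulr_sumr.
rewrite (big_addn 0 s.+1 1) subn1 big_nat_rev /=.
apply: eq_big_nat => q /andP [_ lt_qs].
rewrite hornerZ horner_binpoly add0n.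
have -> : (s - (s - q.+1 + 1) = q)%N by lia.
have -> : (s - q.+1 + 1 = s - q)%N by lia.
have -> : (q%:R - s%:R : rat) = - (s - q)%:R by rewrite natrB ?opprB // ltnW.
rewrite (exprNn (s - q)%:R) natrX.
have -> : (-1) ^+ (s - q).-1 = (-1) ^+ (s + k) * (-1) ^+ q * (-1) ^+ k.-1 :> rat.
  by rewrite -!exprD; apply: signr_odd_eq; lia.
ring.
Qed.

Theorem mainTheorem19 (n s k : nat) (hs : (s <= n)%N) (hk1 : (1 < k)%N) (hkn : (k <= n)%N) :
  (moser s k).[n%:R] = (-1) ^+ k * (moser (n - s) k).[n%:R].
Proof.
have k_gt0 : (0 < k)%N by lia.
rewrite !horner_moser // (@trunc_alt_binom_sum_reflect _ n); [|lia|lia|lia].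
rewrite !mulrA -!exprD.
by congr (_ * _); apply: signr_odd_eq; lia.
Qed.
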